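(* Fix $t\in\{1,\dots,M\}$. For every $z^*\in F(\mathcal{T}_t)$, the number of active indices of $C_t$ at $z^*$ satisfies $|K_t(z^* )|\in\{1,2\}$.
   Context: Fix reals $W,H>0$, integers $N\ge N_m\ge 2$, and widths $w_i>0$, heights $h_i>0$ for $1\le i\le N_m$. Points of $\mathbb{R}^{2N}$ are written $z=(x,y)$ with $x=(x_1,\dots,x_N)$, $y=(y_1,\dots,y_N)$. For $1\le i\le N_m$ let $B_i^x=\{z: 0\le x_i\le W-w_i\}$, $B_i^y=\{z: 0\le y_i\le H-h_i\}$; for $i\neq j$ let $B_{i,j}=B_i^x\cap B_i^y\cap B_j^x\cap B_j^y$, $O^x_{i,j}=\{z: x_i+w_i\le x_j\}$, $O^y_{i,j}=\{z: y_i+h_i\le y_j\}$. Define the closed convex sets $C_{i,j,\mathsf{L}}=O^x_{i,j}\cap B_{i,j}$, $C_{i,j,\mathsf{R}}=O^x_{j,i}\cap B_{i,j}$, $C_{i,j,\mathsf{B}}=O^y_{i,j}\cap B_{i,j}$, $C_{i,j,\mathsf{A}}=O^y_{j,i}\cap B_{i,j}$ (assumed nonempty) and $C_{i,j}=C_{i,j,\mathsf{L}}\cup C_{i,j,\mathsf{R}}\cup C_{i,j,\mathsf{B}}\cup C_{i,j,\mathsf{A}}$. Enumerate the pairs $1\le i<j\le N_m$ by $t=1,\dots,M$ and write $C_t=C_{i,j}$, $C_{t,k}=C_{i,j,k}$. With the Euclidean norm and $\mathrm{d}(z,C)=\inf_{c\in C}\|z-c\|$: $\mathcal{P}_t(z)=\{c\in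 C_t:\|z-c\|=\mathrm{d}(z,C_t)\}$, $P_{t,k}(z)$ is the unique nearest point of $C_{t,k}$ to $z$; for a fixed $\lambda\in(0,2)$, $\mathcal{T}_t(z)=\{z+\lambda(p-z):p\in\mathcal{P}_t(z)\}$, $F(\mathcal{T}_t)=\{z: z\in\mathcal{T}_t(z)\}$. Active indices: $K_t(z)=\{k\in\{\mathsf{L},\mathsf{R},\mathsf{B},\mathsf{A}\}: P_{t,k}(z)\in\mathcal{P}_t(z)\}$. *)

From HB Require Import structures.
From mathcomp Require Import all_boot all_order all_algebra.
From mathcomp Require Import boolp classical_sets reals.
Set Implicit Arguments. Unset Strict Implicit. Unset Printing Implicit Defensive.
Import Order.TTheory GRing.Theory Num.Theory.
Local Open Scope ring_scope.
Local Open Scope classical_set_scope.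

(* The four pieces of C_{i,j}: L (left), R (right), B (below), A (above). *)
Inductive side := sL | sR | sB | sA.

Definition side_enc (k : side) : bool * bool :=
  match k with sL => (false,false) | sR => (false,true)
             | sB => (true,false) | sA => (true,true) end.
Definition side_dec (p : bool * bool) : side :=
  match p with (false,false) => sL | (false,true) => sR
             | (true,false) => sB | (true,true) => sA end.
Lemma side_encK : cancel side_enc side_dec. Proof. by case. Qed.
HB.instance Definition _ := Equality.copy side (can_type side_encK).
HB.instance Definition _ := Choice.copy side (can_type side_encK).
HB.instance Definition _ := Countable.copy side (can_type side_encK).
HB.instance Definition _ := Finite.copy side (can_type side_encK).

Section Packing.
Variables (R : realType) (N : nat).

(* A point z = (x, y) of R^{2N}. *)
Definition pt := (('I_N -> R) * ('I_N -> R))%type.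

Definition dnorm (z c : pt) : R :=
  Num.sqrt (\sum_(k < N) (z.1 k - c.1 k) ^+ 2 + \sum_(k < N) (z.2 k - c.2 k) ^+ 2).

Definition dist (z : pt) (C : set pt) : R := inf [set dnorm z c | c in C].

Variables (W H : R) (w h : 'I_N -> R).

Definition Bx (i : 'I_N) : set pt := [set z | 0 <= z.1 i <= W - w i].
Definition By (i : 'I_N) : set pt := [set z | 0 <= z.2 i <= H - h i].
Definition Bij (i j : 'I_N) : set pt := Bx i `&` By i `&` Bx j `&` By j.
Definition Ox (i j : 'I_N) : set pt := [set z | z.1 i + w i <= z.1 j].
Definition Oy (i j : 'I_N) : set pt := [set z | z.2 i + h i <= z.2 j].

Definition Cpiece (i j : 'I_N) (k : side) : set pt :=
  match k with
  | sL => Ox i j `&` Bij i j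
  | sR => Ox j i `&` Bij i j
  | sB => Oy i j `&` Bij i j
  | sA => Oy j i `&` Bij i j
  end.

Definition Cij (i j : 'I_N) : set pt :=
  Cpiece i j sL `|` Cpiece i j sR `|` Cpiece i j sB `|` Cpiece i j sA.

Definition nearest (C : set pt) (z : pt) : set pt :=
  [set c | C c /\ dnorm z c = dist z C].

Definition Pset (i j : 'I_N) (z : pt) : set pt := nearest (Cij i j) z.

Definition is_Pk (i j : 'I_N) (k : side) (z p : pt) : Prop :=
  nearest (Cpiece i j k) z p.

Variable lam : R.

Definition Tset (i j : 'I_N) (z : pt) : set pt :=
  [set ((fun k => z.1 k + lam * (p.1 k - z.1 k)),
        (fun k => z.2 k + lam * (p.2 k - z.2 k))) | p in Pset i j z].

Definition Fix (i j : 'I_N) : set pt := [set z | Tset i j z z].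

Definition Kset (i j : 'I_N) (z : pt) : {set side} :=
  [set k : side | `[< exists p, is_Pk i j k z p /\ Pset i j z p >]].

End Packing.

(* A fixed point z of T_t satisfies z = z + lam (p - z) for a nearest point p of
   C_t, and lam <> 0 forces p = z: so z lies in C_t and is its own nearest point.
   The active pieces are then exactly the pieces containing z. There is at least
   one since z is in C_t, and at most two, because the left and right pieces
   (x_i + w_i <= x_j and x_j + w_j <= x_i) cannot both contain z when the widths
   are positive, and likewise for the pieces below and above. *)
From HB Require Import structures.
From mathcomp Require Import all_boot all_order all_algebra.
From mathcomp Require Import boolp classical_sets reals.
From mathcomp Require Import lra.
Set Implicit Arguments. Unset Strict Implicit. Unset Printing Implicit Defensive.
Import Order.TTheory GRing.Theory Num.Theory.
Local Open Scope ring_scope.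
Local Open Scope classical_set_scope.

Section Distance.
Variables (R : realType) (N : nat).
Implicit Types (z c : pt R N) (C : set (pt R N)).

Lemma dnorm_ge0 z c : 0 <= dnorm z c.
Proof. exact: sqrtr_ge0. Qed.

Lemma dnorm_self z : dnorm z z = 0.
Proof. by rewrite /dnorm !big1 ?addr0 ?sqrtr0 // => k _; rewrite subrr expr0n. Qed.

Lemma dnorm_eq0 z c : dnorm z c = 0 -> c = z.
Proof.
have sq_ge0 (u v : 'I_N -> R) k : 0 <= (u k - v k) ^+ 2 by exact: sqr_ge0.
have sum_ge0 (u v : 'I_N -> R) : 0 <= \sum_(k < N) (u k - v k) ^+ 2.
  by apply: sumr_ge0 => k _.
move=> /eqP; rewrite sqrtr_eq0 => sum_le0.
have /eqP : \sum_(k < N) (z.1 k - c.1 k) ^+ 2 + \sum_(k < N) (z.2 k - c.2 k) ^+ 2 = 0.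
  by apply: le_anti; rewrite sum_le0 addr_ge0 ?sum_ge0.
rewrite paddr_eq0 ?sum_ge0 // => /andP[/eqP sum1 /eqP sum2] {sum_le0}.
have coord_eq (u v : 'I_N -> R) : \sum_(k < N) (u k - v k) ^+ 2 = 0 -> v = u.
  move=> /(psumr_eq0P (fun k _ => sq_ge0 u v k)) eq0; apply: funext => k.
  by apply/esym/eqP; rewrite -subr_eq0 -sqrf_eq0 eq0.
by case: z c sum1 sum2 => [z1 z2] [c1 c2] /= /coord_eq -> /coord_eq ->.
Qed.

Lemma dist_mem z C : C z -> dist z C = 0.
Proof.
move=> Cz; apply/le_anti/andP; split.
- rewrite -(dnorm_self z); apply: ge_inf; last by exists z.
  by exists 0 => _ [c _ <-]; exact: dnorm_ge0.
- by apply: lb_le_inf; [exists (dnorm z z), z | move=> _ [c _ <-]; exact: dnorm_ge0].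
Qed.

Lemma nearest_mem z c C : C z -> nearest C z c <-> c = z.
Proof.
move=> Cz; split; first by case=> _; rewrite (dist_mem Cz); exact: dnorm_eq0.
by move->; split; rewrite ?(dist_mem Cz) ?dnorm_self.
Qed.

Lemma nearest_self z C : nearest C z z <-> C z.
Proof. by split=> [[]//| Cz]; apply/nearest_mem. Qed.

End Distance.

Lemma relax_eq_self (R : idomainType) (lam a b : R) :
  lam != 0 -> a + lam * (b - a) = a -> b = a.
Proof.
move=> lam_neq0 /eqP; rewrite -subr_eq0 addrC addKr mulf_eq0 (negPf lam_neq0).
by rewrite subr_eq0 => /eqP.
Qed.

Section FixedPoints.
Variables (R : realType) (N : nat) (W H : R) (w h : 'I_N -> R) (i j : 'I_N).
Implicit Types (z : pt R N) (k : side).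

Lemma Fix_nearest_self (lam : R) z :
  lam != 0 -> Fix W H w h lam i j z -> Pset W H w h i j z z.
Proof.
move=> lam_neq0 [p Pp Ep]; suff pz : p = z by rewrite pz in Pp.
case: p z Ep {Pp} => p1 p2 [z1 z2] [Ez1 Ez2].
by congr pair; apply: funext => k; apply: (relax_eq_self lam_neq0);
  [have := congr1 (fun f => f k) Ez1 | have := congr1 (fun f => f k) Ez2].
Qed.

Lemma Kset_mem z k :
  Cij W H w h i j z -> (k \in Kset W H w h i j z) = `[< Cpiece W H w h i j k z >].
Proof.
move=> Cz; rewrite inE; apply/asboolP/asboolP.
- by move=> [p [Pk /(nearest_mem _ Cz) pz]]; case: Pk; rewrite pz.
- by move=> Ckz; exists z; split; apply/nearest_self.
Qed.

Lemma Cij_piece z : Cij W H w h i j z -> exists k, Cpiece W H w h i j k z.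
Proof. by case=> [[[Cz|Cz]|Cz]|Cz]; eexists; exact: Cz. Qed.

Lemma Cpiece_LR_disjoint z :
  0 < w i -> 0 < w j -> Cpiece W H w h i j sL z -> ~ Cpiece W H w h i j sR z.
Proof. by move=> wi_gt0 wj_gt0 [L _] [Rt _]; rewrite /Ox /= in L Rt; lra. Qed.

Lemma Cpiece_BA_disjoint z :
  0 < h i -> 0 < h j -> Cpiece W H w h i j sB z -> ~ Cpiece W H w h i j sA z.
Proof. by move=> hi_gt0 hj_gt0 [B _] [A _]; rewrite /Oy /= in B A; lra. Qed.

End FixedPoints.

Lemma card_side_set (K : {set side}) :
  (0 < #|K|)%N -> ~~ [&& sL \in K & sR \in K] -> ~~ [&& sB \in K & sA \in K] ->
  #|K| \in [:: 1%N; 2%N].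
Proof.
move=> K_gt0 notLR notBA.
pose x := if sL \in K then sL else sR.
pose y := if sB \in K then sB else sA.
have K_sub : K \subset [set x; y]%SET.
  apply/fintype.subsetP => k; rewrite !inE /x /y; move: notLR notBA.
  by case: k; case: (sL \in K); case: (sR \in K); case: (sB \in K); case: (sA \in K).
have : (#|K| <= 2)%N.
  by apply: leq_trans (subset_leq_card K_sub) _; rewrite cards2; case: (x != y).
by rewrite !inE; case: #|K| K_gt0 => [|[|[]]].
Qed.

Theorem mainTheorem4 (R : realType) (W H : R) (N Nm : nat)
  (w h : 'I_N -> R) (lam : R) (i j : 'I_N) :
  0 < W -> 0 < H -> (2 <= Nm)%N -> (Nm <= N)%N ->
  (forall k : 'I_N, (k < Nm)%N -> 0 < w k /\ 0 < h k) ->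
  (forall a b : 'I_N, (a < Nm)%N -> (b < Nm)%N -> a != b ->
     forall k : side, Cpiece W H w h a b k !=set0) ->
  0 < lam < 2 ->
  (i < j)%N -> (j < Nm)%N ->
  forall z : pt R N, Fix W H w h lam i j z ->
    #|Kset W H w h i j z| \in [:: 1%N; 2%N].
Proof.
move=> _ _ _ _ sizes_gt0 _ /andP[lam_gt0 _] ij jNm z Fz.
have [wi_gt0 hi_gt0] := sizes_gt0 i (ltn_trans ij jNm).
have [wj_gt0 hj_gt0] := sizes_gt0 j jNm.
have [Cz _] := Fix_nearest_self (lt0r_neq0 lam_gt0) Fz.
have KE k := Kset_mem k Cz.
apply: card_side_set.
- have [k Ckz] := Cij_piece Cz.
  by apply/card_gt0P; exists k; rewrite KE; apply/asboolP.
- rewrite !KE; apply/andP => -[/asboolP CL /asboolP CR].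
  exact: Cpiece_LR_disjoint CL CR.
- rewrite !KE; apply/andP => -[/asboolP CB /asboolP CA].
  exact: Cpiece_BA_disjoint CB CA.
Qed.
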